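(* Consider the following two-bidder auction. A single good has common value $v$ with CDF $F_v$, density $f_v$, support $\mathbb{R}_+$ and finite mean, and $\mathbb{E}[v]>L\ge 0$. Alice submits a bid knowing only $F_v$; then $v$ is realized and Bob, observing $v$ but not Alice's bid, submits a bid. The highest bid wins and pays its bid (payoff $v$ minus bid) unless it is strictly below the limit price $L$, in which case the good is unsold. If the bids tie, Bob wins; if Bob's bid equals $L$ he can win; a winning bid of Alice equal exactly to $L$ results in no sale. Suppose, in an equilibrium, Bob's bid as a function of $v$ is given by a non-decreasing function $\beta_L$, and let $\beta_L^{-1}(b)=\inf\{v:\beta_L(v)\ge b\}$ be its pseudo-inverse. Then every bid $b_A>L$ of Alice (in the support of her equilibrium strategy) satisfies $$b_A=\mathbb{E}\left[v\mid v<\beta_L^{-1}(b_A)\right].$$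
   Context: Bidders are risk neutral; equilibrium means perfect Bayesian Nash equilibrium. *)

From HB Require Import structures.
From mathcomp Require Import all_boot all_order all_algebra.
From mathcomp Require Import all_classical all_reals all_analysis.
Set Implicit Arguments. Unset Strict Implicit. Unset Printing Implicit Defensive.
Import Order.TTheory GRing.Theory Num.Theory.
Import numFieldNormedType.Exports.
Local Open Scope classical_set_scope.
Local Open Scope ring_scope.

Section Auction.
Variable R : realType.
Local Notation leb := (@lebesgue_measure R).

Definition Pv (f : R -> R) (A : set R) : \bar R :=
  (\int[leb]_(x in A) (f x)%:E)%E.

Definition Ev (f : R -> R) (A : set R) : \bar R :=
  (\int[leb]_(x in A) (x * f x)%:E)%E.

Definition cond_mean (f : R -> R) (A : set R) : R :=
  fine (Ev f A) / fine (Pv f A).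

Definition value_density (f : R -> R) : Prop :=
  [/\ measurable_fun setT f,
      (forall x, 0 <= f x),
      Pv f setT = 1%E &
      Pv f [set` `]-oo, 0[] = 0%E] /\
  (forall a b, 0 <= a -> a < b -> (0 < Pv f [set` `]a, b[%R])%E) /\
  leb.-integrable setT (fun x => (x * f x)%:E).

(* Pseudo-inverse beta^{-1}(b) = inf { v in R_+ : beta v >= b } (+oo if empty). *)
Definition bid_pinv (beta : R -> R) (b : R) : \bar R :=
  ereal_inf [set x%:E | x in [set v | 0 <= v /\ b <= beta v]].

(* Alice's expected payoff from bid a when Bob bids beta(v):
   she wins iff a > L and beta(v) < a (ties go to Bob; a = L means no sale). *)
Definition alice_payoff (f : R -> R) (L : R) (beta : R -> R) (a : R) : \bar R :=
  if L < a then
    (\int[leb]_(x in [set v | (0 <= v)%R /\ (beta v < a)%R]) ((x - a) * f x)%:E)%E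
  else 0%E.

(* Bob's expected payoff with value v and bid b against Alice's mixed strategy
   muA: he wins iff b >= L and Alice's bid is <= b. *)
Definition bob_payoff (muA : probability R R) (L : R) (v b : R) : R :=
  if L <= b then (v - b) * fine (muA [set` `]-oo, b]]) else 0.

Definition in_support (muA : probability R R) (a : R) : Prop :=
  forall e : R, 0 < e -> (0 < muA [set` `]a - e, a + e[%R])%E.

Definition equilibrium (f : R -> R) (L : R) (muA : probability R R)
    (beta : R -> R) : Prop :=
  (forall v, 0 <= v -> forall b, bob_payoff muA L v b <= bob_payoff muA L v (beta v))
  /\ (forall a, in_support muA a ->
        forall a', (alice_payoff f L beta a' <= alice_payoff f L beta a)%E).

End Auction.

From HB Require Import structures.
From mathcomp Require Import all_boot all_order all_algebra.
From mathcomp Require Import all_classical all_reals all_analysis.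
From mathcomp Require Import lra measurable_realfun.
Set Implicit Arguments.
Unset Strict Implicit.
Unset Printing Implicit Defensive.

Import Order.TTheory GRing.Theory Num.Theory.
Import numFieldNormedType.Exports.
Local Open Scope classical_set_scope.
Local Open Scope ring_scope.

(* Every bid a > L in the support of Alice's strategy earns her zero. It earns
   at least zero because bidding L does. If her equilibrium payoff were
   positive, no bid <= L would be in her support, so it has a lowest point
   s > L; a positive payoff at s requires some value v > s at which Bob bids
   below s, but such a Bob wins with probability zero and would gain by
   bidding between s and v.
   Her payoff at a is E[v; v < beta^-1(a)] - a P(v < beta^-1(a)), so the zero
   payoff gives the identity once P(v < beta^-1(a)) > 0, i.e. once Bob bids
   below a at some positive value. Otherwise Bob overbids at the value a/2,
   so he must lose almost surely: Alice puts no mass at or below a, and Bob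
   bids above a at every value above a. Alice's bids a' slightly above a are
   then in her support, yet they win at a loss against all values below a/2
   and gain little elsewhere, so they earn a negative payoff. *)

Section support.
Variables (R : realType) (mu : probability R R).

Lemma measure0_off_support (A : set R) :
  measurable A -> (forall x, A x -> ~ in_support mu x) -> mu A = 0%E.
Proof.
move=> mA off.
(* Each point off the support lies in a null interval with rational endpoints,
   and there are only countably many such intervals. *)
pose F (k : nat) : set R := if @unpickle (rat * rat)%type k is Some (p, q) then
  (if mu [set` `]ratr p, ratr q[] == 0%E then [set` `]ratr p, ratr q[] else set0)
  else set0.
have null_F k : mu.-negligible (F k).
  rewrite /F; case: unpickle => [[p q]|]; last exact: negligible_set0.
  case: eqP => null_pq; last exact: negligible_set0.
  by exists [set` `]ratr p, ratr q[]; split.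
have [N [mN null_N sub]] := negligible_bigcup null_F.
suff AN : A `<=` N by apply: subset_measure0 null_N.
move=> x Ax; apply: sub.
have /existsNP[e /not_implyP[e0 /negP]] := off x Ax; rewrite -leNgt => le0.
have null_e : mu [set` `]x - e, x + e[] = 0%E by apply/eqP; rewrite eq_le le0 measure_ge0.
have xe_lt : x - e < x by rewrite gtrBl.
have lt_xe : x < x + e by rewrite ltrDl.
have [p /[!in_itv]/= /andP[p1 p2]] := rat_in_itvoo xe_lt.
have [q /[!in_itv]/= /andP[q1 q2]] := rat_in_itvoo lt_xe.
exists (pickle (p, q)); first by [].
rewrite /F pickleK.
have -> : mu [set` `]ratr p, ratr q[] = 0%E.
  apply: subset_measure0 null_e => // y /=; rewrite !in_itv/= => /andP[y1 y2].
  by rewrite (lt_trans p1 y1) (lt_trans y2 q2).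
by rewrite eqxx /= in_itv/= p2 q1.
Qed.

Lemma null_ray_le_support x y :
  mu [set` `]-oo, y[] = 0%E -> in_support mu x -> y <= x.
Proof.
move=> null_y xS; rewrite leNgt; apply/negP => xy.
have := xS (y - x); rewrite subr_gt0 => /(_ xy).
rewrite (subset_measure0 _ _ _ null_y) ?ltxx //.
by move=> z /=; rewrite !in_itv/= => /andP[_]; rewrite addrC subrK.
Qed.

Lemma exists_min_support y0 :
  mu [set` `]-oo, y0[] = 0%E ->
  exists2 s, in_support mu s & mu [set` `]-oo, s[] = 0%E.
Proof.
move=> null_y0; pose Z := [set y | mu [set` `]-oo, y[] = 0%E].
have supZ : has_sup Z.
  split; first by exists y0.
  apply: contrapT => unbounded.
  suff : mu setT = 0%E by rewrite probability_setT => /(congr1 fine)/eqP; rewrite oner_eq0.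
  apply: measure0_off_support => // x _ xS.
  by apply: unbounded; exists x => y Zy; exact: null_ray_le_support Zy xS.
have Zs : Z (sup Z).
  apply: measure0_off_support => // x /=; rewrite in_itv/= => xs xS.
  have [z Zz zx] : exists2 z, Z z & sup Z - (sup Z - x) < z.
    by apply: sup_adherent supZ; rewrite subr_gt0.
  have := null_ray_le_support Zz xS; rewrite -/Z in zx *; lra.
exists (sup Z) => // e e0.
rewrite lt0e measure_ge0 andbT; apply/negP => /eqP null_e.
suff /(sup_upper_bound supZ) : Z (sup Z + e) by lra.
apply: subset_measure0 (null_set_setU _ _ Zs null_e) => //; first exact: measurableU.
move=> y /=; rewrite !in_itv/= => ys; have [lt_ys|le_sy] := ltP y (sup Z); [by left|right].
by rewrite ys andbT; apply: lt_le_trans le_sy; rewrite gtrBl.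
Qed.

Lemma exists_support_right a b :
  in_support mu a -> mu [set` `]-oo, a]] = 0%E -> a < b ->
  exists a', [/\ a < a', a' < b & in_support mu a'].
Proof.
move=> aS null_a ab; apply: contrapT => none.
suff /null_ray_le_support /(_ aS) : mu [set` `]-oo, b[] = 0%E by rewrite leNgt ab.
have null_ab : mu [set` `]a, b[] = 0%E.
  apply: measure0_off_support => // x /=; rewrite in_itv/= => /andP[ax xb] xS.
  by apply: none; exists x.
apply: subset_measure0 (null_set_setU _ _ null_a null_ab) => //; first exact: measurableU.
move=> x /=; rewrite !in_itv/= => xb; have [xa|ax] := leP x a; [by left|right].
by apply/andP.
Qed.

End support.

Section bob.
Variables (R : realType) (L : R) (muA : probability R R) (beta : R -> R).
Hypothesis bob_best :
  forall v, 0 <= v -> forall b, bob_payoff muA L v b <= bob_payoff muA L v (beta v).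

Lemma bob_overbid_loses v :
  0 <= v -> v < beta v -> L <= beta v -> muA [set` `]-oo, beta v]] = 0%E.
Proof.
move=> v0 v_lt L_le; have := bob_best v0 (L - 1).
rewrite /bob_payoff L_le ifF; last by apply/negbTE; rewrite -ltNge ltrBlDr ltrDl.
set m := muA _; have m_fin : m \is a fin_num by exact: fin_num_measure.
rewrite nmulr_rge0 ?subr_lt0 // => m_le0.
by apply/eqP; rewrite -fine_eq0 // eq_le m_le0 fine_ge0 ?measure_ge0.
Qed.

Lemma bob_wins_above_support s v : in_support muA s -> L <= s -> 0 <= v -> s < v ->
  muA [set` `]-oo, beta v]] <> 0%E.
Proof.
move=> sS Ls v0 sv null_v.
pose e := (v - s) / 2; have e0 : 0 < e by rewrite divr_gt0 ?subr_gt0.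
have := bob_best v0 (s + e); rewrite /bob_payoff null_v mulr0 if_same.
rewrite ifT; last by rewrite (le_trans Ls) // lerDl ltW.
apply/negP; rewrite -ltNge mulr_gt0 //; first by rewrite /e; lra.
have pos : (0 < muA [set` `]-oo, (s + e)%R]])%E.
  apply: lt_le_trans (sS e e0) _; apply: le_measure; rewrite ?inE //.
  by move=> y /=; rewrite !in_itv/= => /andP[_ /ltW].
by rewrite fine_gt0 // pos ltey_eq fin_num_measure.
Qed.

End bob.

Section density.
Variables (R : realType) (f : R -> R).
Hypothesis hf : value_density f.
Local Notation mu := (@lebesgue_measure R).

Lemma density_ge0 x : 0 <= f x.
Proof. by case: hf => -[]. Qed.

Lemma measurable_density : measurable_fun setT f.
Proof. by case: hf => -[]. Qed.

Lemma integrable_density D : measurable D -> mu.-integrable D (fun x => (f x)%:E).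
Proof.
move=> mD; apply: integrableS (_ : mu.-integrable setT _) => //.
apply/integrableP; split; first by apply/measurable_EFinP; exact: measurable_density.
under eq_integral do rewrite gee0_abs ?lee_fin ?density_ge0 //.
by case: hf => -[_ _ + _] _; rewrite /Pv => ->; rewrite ltry.
Qed.

Lemma integrable_mean D : measurable D -> mu.-integrable D (fun x => (x * f x)%:E).
Proof.
by move=> mD; apply: integrableS (_ : mu.-integrable setT _) => //; case: hf => _ [].
Qed.

Lemma integrable_scaled_density D c : measurable D ->
  mu.-integrable D (fun x => (c * f x)%:E).
Proof.
by move=> mD; apply: eq_integrable (integrableZl (mu := mu) mD c (integrable_density mD)).
Qed.

Lemma integrable_payoff D a : measurable D ->
  mu.-integrable D (fun x => ((x - a) * f x)%:E).
Proof.
move=> mD; apply: eq_integrable (integrableB mD (integrable_mean mD)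
  (integrable_scaled_density a mD)) => // x _.
by rewrite -EFinB mulrBl.
Qed.

Lemma Pv_ge0 A : (0 <= Pv f A)%E.
Proof. by apply: integral_ge0 => x _; rewrite lee_fin density_ge0. Qed.

Lemma Pv_fin_num A : measurable A -> Pv f A \is a fin_num.
Proof. by move=> mA; exact: integrable_fin_num (integrable_density mA). Qed.

Lemma le_Pv A B : measurable A -> measurable B -> A `<=` B -> (Pv f A <= Pv f B)%E.
Proof.
move=> mA mB AB; apply: ge0_subset_integral => //.
  by apply/measurable_EFinP/measurable_funTS; exact: measurable_density.
by move=> x _; rewrite lee_fin density_ge0.
Qed.

Lemma Pv_le1 A : measurable A -> (Pv f A <= 1)%E.
Proof. by move=> mA; case: hf => -[_ _ <- _] _; exact: le_Pv. Qed.

Lemma integral_scaled_density A c : measurable A ->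
  (\int[mu]_(x in A) (c * f x)%:E = (c * fine (Pv f A))%:E)%E.
Proof.
move=> mA; rewrite EFinM fineK ?Pv_fin_num //.
rewrite -(integralZl (mu := mu) mA (integrable_density mA)).
by apply: eq_integral => x _; rewrite EFinM.
Qed.

Lemma Pv_itv_gt0 r : 0 < r -> 0 < fine (Pv f [set` `]0, r[]).
Proof.
move=> r0; case: hf => _ [pos _].
by rewrite fine_gt0 // pos //= ltey_eq Pv_fin_num.
Qed.

Lemma integral_density_nonneg (A : set R) (h : R -> R) :
  measurable A -> measurable_fun setT h ->
  (\int[mu]_(x in A) (h x * f x)%:E =
   \int[mu]_(x in A `&` [set` `[0%R, +oo[]) (h x * f x)%:E)%E.
Proof.
move=> mA mh.
have mhf : measurable_fun setT (fun x => (h x * f x)%:E).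
  by apply/measurable_EFinP/measurable_funM => //; exact: measurable_density.
have f_neg0 : ae_eq mu [set` `]-oo, 0[] (fun x => (f x)%:E) (cst 0%E).
  apply/(ae_eq_integral_abs mu (measurable_itv _)).
    by apply/measurable_EFinP/measurable_funTS; exact: measurable_density.
  under eq_integral do rewrite gee0_abs ?lee_fin ?density_ge0 //.
  by case: hf => -[].
rewrite integral_mkcondr; apply: ae_eq_integral => //.
- exact: measurable_funTS.
- have := (measurable_restrictT _ (measurable_itv `[0%R, +oo[)).1 (measurable_funTS mhf).
  exact: measurable_funTS.
apply: filterS f_neg0 => x fx0 Ax; rewrite patchE.
case: ifPn => //; rewrite notin_setE /= in_itv /= andbT => /negP; rewrite -ltNge => x0.
have : (f x)%:E = 0%E by apply: fx0; rewrite /= in_itv /= x0.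
by case=> ->; rewrite mulr0.
Qed.

End density.

Section pseudo_inverse.
Variables (R : realType) (beta : R -> R).

Definition alice_win_set (a : R) : set R := [set v | (v%:E < bid_pinv beta a)%E].

Lemma measurable_alice_win_set a : measurable (alice_win_set a).
Proof.
rewrite -[alice_win_set a]setTI.
exact: (EFin_measurable measurableT (emeasurable_itv `]-oo, bid_pinv beta a[)).
Qed.

Lemma lt_bid_pinv a x : 0 <= x -> (x%:E < bid_pinv beta a)%E -> beta x < a.
Proof.
move=> x0; rewrite ltNge; apply: contraNlt => ax.
by apply: ereal_inf_lbound; exists x.
Qed.

Lemma bid_pinv_le a y : 0 <= y -> a <= beta y -> (bid_pinv beta a <= y%:E)%E.
Proof. by move=> y0 ay; apply: ereal_inf_lbound; exists y. Qed.

Hypothesis beta_mono : forall x y, 0 <= x -> x <= y -> beta x <= beta y.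

Lemma le_bid_pinv a x : 0 <= x -> beta x < a -> (x%:E <= bid_pinv beta a)%E.
Proof.
move=> x0 bx; apply: le_ereal_inf_tmp => _ [y [y0 ay] <-]; rewrite lee_fin.
rewrite leNgt; apply/negP => yx.
by have := beta_mono y0 (ltW yx); lra.
Qed.

End pseudo_inverse.

Section alice_payoff.
Variables (R : realType) (f : R -> R) (L : R) (beta : R -> R).
Hypothesis hf : value_density f.
Hypothesis beta_mono : forall x y, 0 <= x -> x <= y -> beta x <= beta y.
Local Notation mu := (@lebesgue_measure R).
Local Notation nonneg := [set` `[0%R, +oo[].

Lemma alice_payoffE a : L < a ->
  alice_payoff f L beta a =
  (\int[mu]_(x in alice_win_set beta a `&` nonneg) ((x - a) * f x)%:E)%E.
Proof.
move=> La; rewrite /alice_payoff La.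
set S := [set v | _ /\ _]; set D := _ `&` _.
have mD : measurable D.
  by apply: measurableI; [exact: measurable_alice_win_set|exact: measurable_itv].
have DS : D `<=` S.
  by move=> x [xC]; rewrite /= in_itv/= andbT => x0; split => //; exact: lt_bid_pinv xC.
have SD1 : S `\` D `<=` [set fine (bid_pinv beta a)].
  move=> x [[x0 bx] nD] /=.
  have : ~ (x%:E < bid_pinv beta a)%E by move=> xC; apply: nD; split; rewrite //= in_itv/= x0.
  move/negP; rewrite -leNgt => le_x.
  by rewrite (@le_anti _ _ (bid_pinv beta a) x%:E) ?le_x ?le_bid_pinv.
have mSD : measurable (S `\` D).
  by have [->|->] := subset_set1 SD1; [exact: measurable0|exact: measurable_set1].
rewrite -(setDUK DS) integral_setU //.
- by rewrite (integral_Sset1 _ SD1) adde0.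
- apply: measurable_funTS; apply/measurable_EFinP/measurable_funM.
    exact: measurable_funB.
  exact: measurable_density.
- by rewrite disj_set2E setDIK.
Qed.

Lemma alice_payoff_mean a : L < a ->
  alice_payoff f L beta a =
  (fine (Ev f (alice_win_set beta a)) - a * fine (Pv f (alice_win_set beta a)))%:E.
Proof.
move=> La; rewrite alice_payoffE //.
set C := alice_win_set beta a; set D := C `&` _.
have mC : measurable C by exact: measurable_alice_win_set.
have mD : measurable D by apply: measurableI => //; exact: measurable_itv.
have -> : Ev f C = (\int[mu]_(x in D) (x * f x)%:E)%E.
  exact: (integral_density_nonneg hf (h := id) mC).
have -> : Pv f C = (\int[mu]_(x in D) (f x)%:E)%E.
  rewrite /Pv; under eq_integral do rewrite -[f _]mul1r.
  rewrite (integral_density_nonneg hf (h := fun=> 1) mC) //.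
  by apply: eq_integral => x _; rewrite mul1r.
have iM := integrable_mean hf mD.
under eq_integral do rewrite mulrBl EFinB.
rewrite (integralB_EFin (mu := mu) mD iM (integrable_scaled_density hf a mD)).
rewrite integral_scaled_density //.
rewrite -[X in (X - _)%E](fineK (integrable_fin_num (mu := mu) mD iM)).
by rewrite -EFinB.
Qed.

Lemma alice_payoff_gt0_witness a : L < a -> (0 < alice_payoff f L beta a)%E ->
  exists x, [/\ 0 <= x, beta x < a & a < x].
Proof.
move=> La; apply: contraPP => none; apply/negP; rewrite -leNgt alice_payoffE //.
set D := _ `&` _.
have le_a x : D x -> x <= a.
  move=> [xC]; rewrite /= in_itv/= andbT => x0; rewrite leNgt; apply/negP => ax.
  by apply: none; exists x; split => //; exact: lt_bid_pinv xC.
have ge0 x : D x -> (0 <= ((a - x) * f x)%:E)%E.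
  by move=> Dx; rewrite lee_fin mulr_ge0 ?(density_ge0 hf) // subr_ge0 le_a.
under eq_integral do rewrite -[(_ - a) * _]opprK -mulNr opprB EFinN.
by rewrite integral_ge0N // oppe_le0 integral_ge0.
Qed.

Lemma alice_payoff_le a r t c : L < a -> 0 < r ->
  (r%:E <= bid_pinv beta a)%E -> (bid_pinv beta a <= t%:E)%E -> 0 <= c -> t - a <= c ->
  (alice_payoff f L beta a <= ((r - a) * fine (Pv f [set` `]0, r[]) + c)%:E)%E.
Proof.
move=> La r0 r_le le_t c0 tac; rewrite alice_payoffE //.
set D := _ `&` _; set I := [set` `]0, r[].
have mD : measurable D.
  by apply: measurableI; [exact: measurable_alice_win_set|exact: measurable_itv].
have mI : measurable I by exact: measurable_itv.
have mDI : measurable (D `\` I) by exact: measurableD.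
have ID : I `<=` D.
  move=> x; rewrite /I /D /= in_itv/= => /andP[x0 xr].
  split; last by rewrite in_itv/= andbT ltW.
  by apply: lt_le_trans r_le; rewrite lte_fin.
have D_lt x : D x -> x < t by move=> [xC _]; rewrite -lte_fin (lt_le_trans xC).
rewrite -(setDUK ID) integral_setU //; last 2 first.
- by rewrite setDUK //; exact: measurable_int (integrable_payoff hf a mD).
- by rewrite disj_set2E setDIK.
rewrite EFinD; apply: leeD.
- rewrite -integral_scaled_density //.
  apply: le_integral (integrable_payoff hf a mI) _ _ => //.
    exact: integrable_scaled_density.
  move=> x /[!inE]; rewrite /I /= in_itv/= => /andP[_ xr].
  by rewrite lee_fin ler_wpM2r ?(density_ge0 hf) //; lra.
- apply: le_trans (_ : _ <= (c * fine (Pv f (D `\` I)))%:E)%E _.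
    rewrite -integral_scaled_density //.
    apply: le_integral (integrable_payoff hf a mDI) _ _ => //.
      exact: integrable_scaled_density.
    move=> x /[!inE] -[Dx _].
    by rewrite lee_fin ler_wpM2r ?(density_ge0 hf) //; have := D_lt x Dx; lra.
  rewrite lee_fin ler_piMr // ?fine_ge0 ?Pv_ge0 //.
  by rewrite -lee_fin fineK ?Pv_fin_num ?Pv_le1.
Qed.

End alice_payoff.

Section equilibrium.
Variables (R : realType) (f : R -> R) (L : R) (muA : probability R R) (beta : R -> R).
Hypothesis hf : value_density f.
Hypothesis beta_mono : forall x y, 0 <= x -> x <= y -> beta x <= beta y.
Hypothesis heq : equilibrium f L muA beta.

Lemma alice_payoff_support_eq0 a : in_support muA a -> L < a -> alice_payoff f L beta a = 0%E.
Proof.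
move=> aS La; have [bob_best alice_best] := heq.
have payoff_low x : x <= L -> alice_payoff f L beta x = 0%E.
  by rewrite /alice_payoff ltNge => ->.
have ge0 : (0 <= alice_payoff f L beta a)%E by rewrite -(payoff_low L) // alice_best.
apply/eqP; rewrite eq_le ge0 andbT leNgt; apply/negP => pos.
have low_out x : x <= L -> ~ in_support muA x.
  move=> xL xS; have := alice_best _ xS a.
  by rewrite (payoff_low x xL) => le0; have := lt_le_trans pos le0; rewrite ltxx.
have [s sS null_s] : exists2 s, in_support muA s & muA [set` `]-oo, s[] = 0%E.
  apply: (@exists_min_support _ _ L); apply: measure0_off_support => // x.
  by rewrite /= in_itv/= => /ltW; exact: low_out.
have Ls : L < s by rewrite ltNge; apply/negP => /low_out.
have [x [x0 bxs sx]] :=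
  alice_payoff_gt0_witness hf beta_mono Ls (lt_le_trans pos (alice_best _ sS a)).
apply: (bob_wins_above_support bob_best sS (ltW Ls) x0 sx).
apply: subset_measure0 null_s => // y /=; rewrite !in_itv/= => yb.
exact: le_lt_trans yb bxs.
Qed.

Hypothesis L_ge0 : 0 <= L.

Lemma bob_bids_below a : in_support muA a -> L < a -> exists2 y, 0 < y & beta y < a.
Proof.
move=> aS La; apply: contrapT => none.
have hi y : 0 < y -> a <= beta y.
  by move=> y0; rewrite leNgt; apply/negP => bya; apply: none; exists y.
have a0 : 0 < a := le_lt_trans L_ge0 La.
pose v := a / 2; have v0 : 0 < v by rewrite divr_gt0.
have [bob_best _] := heq.
have null_v : muA [set` `]-oo, beta v]] = 0%E.
  apply: (bob_overbid_loses bob_best (ltW v0)); last exact: le_trans (ltW La) (hi v v0).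
  by apply: lt_le_trans (hi v v0); rewrite /v; lra.
have bva : beta v <= a.
  apply: null_ray_le_support aS; apply: subset_measure0 null_v => // y /=.
  by rewrite !in_itv/= => /ltW.
have null_a : muA [set` `]-oo, a]] = 0%E.
  apply: subset_measure0 null_v => // y /=; rewrite !in_itv/= => ya.
  exact: le_trans ya (hi v v0).
have above w : a < w -> a < beta w.
  move=> aw; rewrite ltNge; apply/negP => bwa.
  apply: (bob_wins_above_support bob_best aS (ltW La) _ aw); first lra.
  apply: subset_measure0 null_a => // y /=; rewrite !in_itv/= => yb.
  exact: le_trans yb bwa.
pose p := fine (Pv f [set` `]0, v[]); have p0 : 0 < p := Pv_itv_gt0 hf v0.
pose v1 := a + v * p / 2.
have av1 : a < v1 by rewrite ltrDl !mulr_gt0.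
have [a' [aa' a'b a'S]] := exists_support_right aS null_a (above v1 av1).
have v_le : (v%:E <= bid_pinv beta a')%E.
  apply: (le_bid_pinv beta_mono (ltW v0)); exact: le_lt_trans bva aa'.
have le_v1 : (bid_pinv beta a' <= v1%:E)%E.
  exact: bid_pinv_le (le_trans (ltW a0) (ltW av1)) (ltW a'b).
have c0 : 0 <= v * p / 2 by rewrite ltW // !mulr_gt0.
have gap : v1 - a' <= v * p / 2 by rewrite /v1; lra.
have := alice_payoff_le hf beta_mono (lt_trans La aa') v0 v_le le_v1 c0 gap.
rewrite alice_payoff_support_eq0 ?(lt_trans La aa') // lee_fin.
have loss : (v - a') * p < - v * p by rewrite ltr_pM2r //; rewrite /v in aa' *; lra.
have vp : 0 < v * p by rewrite mulr_gt0.
by apply/negP; rewrite -ltNge -/p; lra.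
Qed.

End equilibrium.

Theorem lemma3 (R : realType) (f : R -> R) (L : R) (muA : probability R R)
    (beta : R -> R) :
  value_density f ->
  0 <= L ->
  (L%:E < Ev f setT)%E ->
  (forall x y, 0 <= x -> x <= y -> beta x <= beta y) ->
  equilibrium f L muA beta ->
  forall bA, in_support muA bA -> L < bA ->
    bA = cond_mean f [set v | (v%:E < bid_pinv beta bA)%E].
Proof.
move=> hf L_ge0 _ beta_mono heq bA bAS LbA.
have := alice_payoff_support_eq0 hf beta_mono heq bAS LbA.
rewrite alice_payoff_mean // => /(congr1 fine)/eqP; rewrite subr_eq0 => /eqP Ev_eq.
have [y y0 bya] := bob_bids_below hf beta_mono heq L_ge0 bAS LbA.
have P_gt0 : 0 < fine (Pv f (alice_win_set beta bA)).
  have sub : [set` `]0, y[] `<=` alice_win_set beta bA.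
    move=> x /=; rewrite in_itv/= => /andP[_ xy].
    by apply: lt_le_trans (le_bid_pinv beta_mono (ltW y0) bya); rewrite lte_fin.
  have mC := measurable_alice_win_set beta bA.
  apply: lt_le_trans (Pv_itv_gt0 hf y0) _.
  by rewrite fine_le ?Pv_fin_num ?(le_Pv hf _ mC sub).
by rewrite /cond_mean Ev_eq mulfK // gt_eqF.
Qed.
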